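(* Let $k\ge0$ and let $G=(X\cup Y,E)$ be a connected bipartite graph. Let $D=(<_X,<_Y)$ be a 2-layer $k$-planar drawing of $G$, and let $S\subseteq X$ be a set of $2k+1$ vertices that are consecutive in $<_X$. Let $x$ and $x'$ be the leftmost and rightmost vertex of $S$ in $<_X$. Then for every connected component $C$ of $G[V(G)\setminus N[S]]$, the vertices of $C\cap X$ are either all to the left of $x$ (i.e., $<_X x$) or all to the right of $x'$.
   Context: $N[S]$ denotes $S$ together with all neighbors of vertices of $S$; $G[U]$ is the induced subgraph. A 2-layer drawing of a bipartite graph $G=(X\cup Y,E)$ ($X\cap Y=\emptyset$, $E\subseteq X\times Y$) is a pair $(<_X,<_Y)$ of strict linear orders on $X$ and $Y$. Edges $\{x,y\},\{x',y'\}$ with $x\ne x'\in X$, $y\ne y'\in Y$ cross if $x<_Xx'$ and $y'<_Yy$. The drawing is $k$-planar if every edge crosses at most $k$ edges. *)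

From mathcomp Require Import all_boot.
Set Implicit Arguments. Unset Strict Implicit. Unset Printing Implicit Defensive.

Section Bip.
Variables (X Y : finType) (E : X -> Y -> bool).

Definition vtx := (X + Y)%type.

Definition adj : rel vtx := fun u v =>
  match u, v with
  | inl x, inr y => E x y
  | inr y, inl x => E x y
  | _, _ => false
  end.

Definition connected_graph : Prop := forall u v : vtx, connect adj u v.

Definition closed_nbhd (S : {set X}) : {set vtx} :=
  [set v : vtx | match v with
                 | inl x => x \in S
                 | inr y => [exists s in S, E s y]
                 end].

Definition induced_adj (U : {set vtx}) : rel vtx :=
  fun u v => [&& u \in U, v \in U & adj u v].
End Bip.

Definition strict_linear_order (T : finType) (lt : rel T) : Prop :=
  (forall a, ~~ lt a a) /\
  (forall a b c, lt a b -> lt b c -> lt a c) /\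
  (forall a b, a != b -> lt a b || lt b a).

Section Drawing.
Variables (X Y : finType) (E : X -> Y -> bool) (ltX : rel X) (ltY : rel Y).

Definition cross (e f : X * Y) : bool :=
  [&& e.1 != f.1, e.2 != f.2 &
      (ltX e.1 f.1 && ltY f.2 e.2) || (ltX f.1 e.1 && ltY e.2 f.2)].

Definition edges : {set X * Y} := [set e : X * Y | E e.1 e.2].

Definition k_planar (k : nat) : Prop :=
  forall e, e \in edges -> #|[set f in edges | cross e f]| <= k.

Definition consecutive (S : {set X}) : Prop :=
  forall a b c, a \in S -> b \in S -> ltX a c -> ltX c b -> c \in S.
End Drawing.

From mathcomp Require Import all_boot.

Set Implicit Arguments.
Unset Strict Implicit.
Unset Printing Implicit Defensive.

(* X-vertices of a component C of G - N[S] lie outside S, hence left of x or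
   right of x'.  Two X-vertices a, b of C with a common neighbour y in C are on
   the same side: otherwise every s in S has an edge avoiding y (as y is not in
   N[S]), and that edge crosses ay or by according to the side of y its other
   endpoint lies on, so the 2k + 1 vertices of S give 2k + 1 edges crossing one
   of two edges, against k-planarity.  Hence being left of x is invariant
   along C. *)

Section Graph.
Variables (X Y : finType) (E : X -> Y -> bool).

Lemma adj_sym : symmetric (adj E).
Proof. by case=> [x|y] [x'|y']. Qed.

Lemma connect_induced_sym (U : {set vtx X Y}) : connect_sym (induced_adj E U).
Proof. by apply: sym_connect_sym => u v; rewrite /induced_adj adj_sym andbCA. Qed.

Lemma connect_induced_closed (U : {set vtx X Y}) u v :
  connect (induced_adj E U) u v -> u \in U -> v \in U.
Proof.
move=> uv; rewrite (closed_connect _ uv) //.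
by apply: intro_closed; [exact: connect_induced_sym | move=> w w' /and3P[]].
Qed.

Lemma connected_has_neighbour (s a : X) :
  connected_graph E -> s != a -> exists y, E s y.
Proof.
move=> conn sa; case/connectP: (conn (inl s) (inl a)) => [[|w p]] /=.
  by move=> _ [eq_sa]; rewrite eq_sa eqxx in sa.
by case: w => [//|y] /andP[Esy _] _; exists y.
Qed.

Lemma notin_closed_nbhd_l (S : {set X}) (c : X) :
  (inl c \notin closed_nbhd E S) = (c \notin S).
Proof. by rewrite inE. Qed.

Lemma notin_closed_nbhd_r (S : {set X}) (y : Y) (s : X) :
  inr y \notin closed_nbhd E S -> s \in S -> ~~ E s y.
Proof. by rewrite inE => /existsPn/(_ s); rewrite negb_and => /orP[/negP|]. Qed.

End Graph.

Section Crossings.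
Variables (X Y : finType) (E : X -> Y -> bool) (ltX : rel X) (ltY : rel Y).
Hypotheses (irrX : forall a, ~~ ltX a a)
           (totY : forall a b, a != b -> ltY a b || ltY b a).

Lemma card_le_two_crossings k (T : {set X}) a b y :
  k_planar E ltX ltY k -> E a y -> E b y ->
  (forall s, s \in T -> [/\ ltX a s, ltX s b & exists2 y', E s y' & y' != y]) ->
  #|T| <= k + k.
Proof.
move=> kpl Eay Eby hT.
pose other s := odflt y [pick y' | E s y' && (y' != y)].
have other_spec s : s \in T -> E s (other s) && (other s != y).
  move=> sT; rewrite /other; case: pickP => [//|none].
  by case: (hT s sT) => _ _ [y' Esy' y'y]; have := none y'; rewrite Esy' y'y.
pose crossing e := [set f in edges E | cross ltX ltY e f].
have sub : [set (s, other s) | s in T] \subset crossing (a, y) :|: crossing (b, y).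
  apply/subsetP => _ /imsetP[s sT ->].
  case: (hT s sT) => as_ sb _; case/andP: (other_spec s sT) => Es ny.
  have a_ne_s : a != s by apply: contraTneq as_ => ->; exact: irrX.
  have b_ne_s : b != s by apply: contraTneq sb => ->; exact: irrX.
  rewrite !inE /cross /= Es a_ne_s b_ne_s eq_sym ny as_ sb /=.
  by case/orP: (totY ny) => ->; rewrite ?orbT.
have := subset_leq_card sub; rewrite card_imset; last by move=> s1 s2 [].
move/leq_trans; apply; apply: leq_trans (leq_card_setU _ _) _.
by apply: leq_add; apply: kpl; rewrite inE.
Qed.

End Crossings.

Section Component.
Variables (k : nat) (X Y : finType) (E : X -> Y -> bool) (ltX : rel X) (ltY : rel Y).
Variables (S : {set X}) (x x' : X).
Hypotheses (irrX : forall a, ~~ ltX a a)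
           (trX : forall a b c, ltX a b -> ltX b c -> ltX a c)
           (totX : forall a b, a != b -> ltX a b || ltX b a)
           (totY : forall a b, a != b -> ltY a b || ltY b a).
Hypotheses (consS : consecutive ltX S)
           (xS : x \in S) (xmin : forall s, s \in S -> s != x -> ltX x s)
           (x'S : x' \in S) (x'max : forall s, s \in S -> s != x' -> ltX s x').

Lemma left_of_S s : s \in S -> ltX x s || (s == x).
Proof. by move=> sS; have [->|/(xmin sS)->//] := eqVneq s x; rewrite orbT. Qed.

Lemma right_of_S s : s \in S -> ltX s x' || (s == x').
Proof. by move=> sS; have [->|/(x'max sS)->//] := eqVneq s x'; rewrite orbT. Qed.

Lemma left_notin_S c : ltX c x -> c \notin S.
Proof.
move=> cx; apply/negP => /left_of_S /orP[/(trX cx)|/eqP eq_cx].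
  exact/negP/irrX.
by move: (irrX c); rewrite {2}eq_cx cx.
Qed.

Lemma left_or_right c : c \notin S -> ltX c x || ltX x' c.
Proof.
move=> cS; have ne s : s \in S -> c != s by move=> sS; apply: contraNneq cS => ->.
case/orP: (totX (ne _ xS)) => [->//|xc].
case/orP: (totX (ne _ x'S)) => [cx'|->]; last by rewrite orbT.
by rewrite (consS xS x'S xc cx') in cS.
Qed.

Hypotheses (conn : connected_graph E) (kpl : k_planar E ltX ltY k)
           (cardS : #|S| = (2 * k + 1)%N).

Let U := ~: closed_nbhd E S.

Lemma no_common_neighbour_across a b y :
  ltX a x -> ltX x' b -> E a y -> E b y -> inr y \in U -> False.
Proof.
move=> ax x'b Eay Eby; rewrite in_setC => yU.
suff : #|S| <= k + k by rewrite cardS addnn -mul2n addn1 ltnn.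
apply: (card_le_two_crossings irrX totY kpl Eay Eby) => s sS; split.
- by case/orP: (left_of_S sS) => [/(trX ax)|/eqP ->].
- by case/orP: (right_of_S sS) => [/trX/(_ x'b)|/eqP ->].
- have sa : s != a by apply: contraTneq sS => ->; exact: left_notin_S.
  have [y' Esy'] := connected_has_neighbour conn sa; exists y' => //.
  by apply: contraTneq Esy' => ->; exact: notin_closed_nbhd_r yU sS.
Qed.

Definition left_side (w : vtx X Y) : bool :=
  match w with
  | inl c => ltX c x
  | inr y => [forall c, E c y ==> ltX c x]
  end.

Lemma left_side_closed : closed (induced_adj E U) left_side.
Proof.
apply: intro_closed; first exact: connect_induced_sym.
move=> [c|y] [c'|y'] /and3P[wU w'U] //= Ewy; rewrite !unfold_in /=.
  move=> cx; apply/forallP => c'; apply/implyP => Ec'y'.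
  have c'S : c' \notin S.
    by apply: contraL Ec'y'; move: w'U; rewrite in_setC; exact: notin_closed_nbhd_r.
  case/orP: (left_or_right c'S) => // x'c'.
  by case: (no_common_neighbour_across cx x'c' Ewy Ec'y' w'U).
by move/forallP/(_ c')/implyP; apply.
Qed.

End Component.

Theorem lemma4p1 (k : nat) (X Y : finType) (E : X -> Y -> bool)
    (ltX : rel X) (ltY : rel Y) (S : {set X}) (x x' : X) :
  connected_graph E ->
  strict_linear_order ltX -> strict_linear_order ltY ->
  k_planar E ltX ltY k ->
  #|S| = (2 * k + 1)%N -> consecutive ltX S ->
  x \in S -> (forall s, s \in S -> s != x -> ltX x s) ->
  x' \in S -> (forall s, s \in S -> s != x' -> ltX s x') ->
  let U := ~: closed_nbhd E S in
  (* C = the component of G[V \ N[S]] containing the vertex v *)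
  forall v : vtx X Y, v \in U ->
    (forall u : X, connect (induced_adj E U) v (inl u) -> ltX u x) \/
    (forall u : X, connect (induced_adj E U) v (inl u) -> ltX x' u).
Proof.
move=> conn [irrX [trX totX]] [_ [_ totY]] kpl cardS consS xS xmin x'S x'max U v vU.
have side_of u : connect (induced_adj E U) v (inl u) -> left_side E ltX x v = ltX u x.
  move=> vu; have cl := left_side_closed irrX trX totX totY consS xS xmin x'S x'max conn kpl cardS.
  exact: closed_connect cl _ _ vu.
have [v_left|v_right] := boolP (left_side E ltX x v); [left|right] => u vu.
  by rewrite -(side_of u vu).
have uS : u \notin S.
  by rewrite -(notin_closed_nbhd_l E) -in_setC; exact: connect_induced_closed vu vU.
case/orP: (left_or_right totX consS xS x'S uS) => // u_left.
by move: v_right; rewrite (side_of u vu) u_left.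
Qed.
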